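(* Let $n\ge 6$ be even and let $L$ be a Latin square of order $n$ with inner distance $\frac n2-1$. If some row of $L$ has extended difference row equal to Row A, then $L$ is a row product.
   Context: Symbols are $[1,n]$; $\mathrm{dist}(a,b)$ is the minimum of the residues of $a-b$ and $b-a$ mod $n$ (in $[0,n-1]$). A Latin square of order $n$ is an $n\times n$ matrix $(m_{i,j})$ over $[1,n]$ with each symbol exactly once per row and column; its inner distance is the minimum of $\mathrm{dist}$ over symbols in horizontally or vertically adjacent cells. For a Latin row $(s_1,\dots,s_n)$, with $h_j\in[0,n-1]$, $h_j\equiv s_{j+1}-s_j\pmod n$ ($1\le j\le n-1$) and $h_n\equiv s_1-s_n\pmod n$, its difference row is $(h_1,\dots,h_{n-1})$ and its extended difference row is $(\epsilon_1,\dots,\epsilon_{n-1},h)$ with $\epsilon_j=h_j-\frac n2$, $h=h_n-\frac n2$ (integers). Row A is the extended difference row $(0,1,0,1,\dots,1,0,1-\frac n2)$, whose first $n-1$ entries alternate $0,1$ starting and ending with $0$. For $L$, $H$ is the $n\times(n-1)$ matrix with $h_{i,j}\equiv m_{i,j+1}-m_{i,j}$ and $V$ the $(n-1)\times n$ matrix with $v_{i,j}\equiv m_{i+1,j}-m_{i,j}$ (mod $n$). A row product is a Latin square obtained by adding a constant mod $n$ to all entries of $\mathrm{prod}(d,d')$, the $n\times n$ matrix with $1$ in cell $(1,1)$ whose $H$ has every row equal to a difference row $d$ and whose $V$ has every column equal to a difference row $d'$. *)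

(* Conventions: a Latin square of order n is a function
   L : nat -> nat -> nat, read on 0-based indices i, j < n (cell (i,j) here is
   cell (i+1,j+1) of the paper); symbols are the naturals in [1,n]. *)
From mathcomp Require Import all_boot all_order all_algebra.
Set Implicit Arguments.
Unset Strict Implicit.
Unset Printing Implicit Defensive.
Import GRing.Theory Num.Theory.

Definition mdiff (n a b : nat) : nat := absz ((Posz b - Posz a)%R %% Posz n)%Z.

Definition dist (n a b : nat) : nat := minn (mdiff n b a) (mdiff n a b).

Definition latin_row (n : nat) (s : nat -> nat) : Prop :=
  (forall j, j < n -> 1 <= s j <= n) /\
  (forall j k, j < n -> k < n -> s j = s k -> j = k).

Definition latin_square (n : nat) (L : nat -> nat -> nat) : Prop :=
  (forall i, i < n -> latin_row n (fun j => L i j)) /\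
  (forall j, j < n -> latin_row n (fun i => L i j)).

Definition inner_distance (n : nat) (L : nat -> nat -> nat) : nat :=
  minn (\big[minn/n]_(i < n) \big[minn/n]_(j < n.-1) dist n (L i j) (L i j.+1))
       (\big[minn/n]_(i < n.-1) \big[minn/n]_(j < n) dist n (L i j) (L i.+1 j)).

(* difference row (h_1,...,h_{n-1}) of a row s, 0-based: entry j < n-1 is
   the residue of s_{j+1} - s_j *)
Definition diff_row (n : nat) (s : nat -> nat) (j : nat) : nat :=
  mdiff n (s j) (s j.+1).

(* extended difference row (eps_1,...,eps_{n-1},h), 0-based: entries
   j < n-1 are h_j - n/2, entry n-1 is h_n - n/2 where h_n = s_1 - s_n mod n *)
Definition ext_diff_row (n : nat) (s : nat -> nat) (j : nat) : int :=
  if j < n.-1 then (Posz (diff_row n s j) - Posz n./2)%R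
  else (Posz (mdiff n (s n.-1) (s 0)) - Posz n./2)%R.

Definition rowA (n : nat) (j : nat) : int :=
  if j < n.-1 then Posz (odd j) else (1 - Posz n./2)%R.

(* representative in [1,n] of x modulo n *)
Definition to_sym (n x : nat) : nat := (x + n.-1) %% n + 1.

(* prod(d,d'): entry 1 at (1,1), every row of H equal to d, every column of
   V equal to d' *)
Definition prodm (n : nat) (d d' : nat -> nat) (i j : nat) : nat :=
  to_sym n (1 + \sum_(k < i) d' k + \sum_(k < j) d k).

(* L is a row product: L = prod(d,d') + c (mod n) for difference rows d, d'
   (i.e. difference rows of Latin rows s, t) and a constant c *)
Definition row_product (n : nat) (L : nat -> nat -> nat) : Prop :=
  exists (s t : nat -> nat) (c : nat),
    latin_row n s /\ latin_row n t /\
    forall i j, i < n -> j < n ->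
      L i j = to_sym n (prodm n (diff_row n s) (diff_row n t) i j + c).

(* Write n = 2m.  Inner distance m - 1 means that horizontally or vertically
   adjacent symbols differ by m + x modulo n with x in {-1, 0, 1}.  Compare a
   row u with a row of shape A, whose symbols are a + k and a + k + m in
   columns 2k and 2k + 1: the deviations of u in even and odd columns are
   constrained by the adjacencies inside u and by u being Latin, and these
   constraints force them to be constant as soon as they take only two
   consecutive values or avoid 0 and lie in [-2, 2].  If s has shape A and u, v
   are the next two rows, v deviates from s by a nonzero amount (no column
   repeats a symbol), hence by a constant; its sign excludes one deviation of
   u from s, so u is a translate of s and has shape A in turn.  Propagating
   from the given row reaches every row except the first and the last, which
   are handled through the translate two rows further in.  All rows are then
   translates of the first one, and L is the row product of its first row and
   its first column. *)

From mathcomp Require Import all_boot all_order all_algebra.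
From mathcomp Require Import zify.
Set Implicit Arguments.
Unset Strict Implicit.
Unset Printing Implicit Defensive.
Import Order.TTheory GRing.Theory Num.Theory.
Local Open Scope ring_scope.

Lemma eqz_modP (d x y : int) : (x = y %[mod d])%Z <-> exists q, x = y + q * d.
Proof.
split=> [/eqP|[q ->]]; last by rewrite addrC modzMDl.
by rewrite eqz_mod_dvd => /dvdzP[q hq]; exists q; lia.
Qed.

Lemma eqz_mod_small (d : nat) (x y : int) :
  (x = y %[mod d])%Z -> - d%:Z < x - y < d%:Z -> x = y.
Proof.
case/eqz_modP=> q ->; have : q = 0 \/ 1 <= q \/ q <= -1 by lia.
by case=> [->|[q_ge1|q_le1]]; nia.
Qed.

Lemma mdiffE n a b : (0 < n)%N -> (mdiff n a b)%:Z = ((b%:Z - a%:Z) %% n)%Z.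
Proof. by move=> n_gt0; rewrite /mdiff gez0_abs // modz_ge0 //; lia. Qed.

Lemma mdiff_lt n a b : (0 < n)%N -> (mdiff n a b < n)%N.
Proof.
by move=> n_gt0; have := @ltz_pmod (b%:Z - a%:Z) n; rewrite -mdiffE //; lia.
Qed.

Lemma mdiff_eqmod n a b : (0 < n)%N -> (b%:Z = a%:Z + (mdiff n a b)%:Z %[mod n])%Z.
Proof. by move=> n_gt0; rewrite mdiffE // modzDmr; congr (_ %% _)%Z; lia. Qed.

Lemma mdiff_swap_sum n a b : (0 < n)%N ->
  (mdiff n a b + mdiff n b a = 0)%N \/ (mdiff n a b + mdiff n b a = n)%N.
Proof.
move=> n_gt0; have ab_lt := mdiff_lt a b n_gt0; have ba_lt := mdiff_lt b a n_gt0.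
case/eqz_modP: (mdiff_eqmod a b n_gt0) => q1 e1.
case/eqz_modP: (mdiff_eqmod b a n_gt0) => q2 e2.
have : q1 + q2 = 0 \/ q1 + q2 = -1 by nia.
by lia.
Qed.

Lemma nondecn_lt (f : nat -> int) (N : nat) :
  (forall k, (k.+1 < N)%N -> f k <= f k.+1) -> forall i j, (i <= j < N)%N -> f i <= f j.
Proof.
move=> f_step i j /andP[ij jN].
apply: (Order.NatMonotonyTheory.nondecn_inP (D := gtn N)) => //;
  rewrite ?inE ?leEnat //; try lia.
- by move=> a b /[!inE] aN bN c /andP[_]; rewrite ltEnat /= inE; lia.
- by move=> k _; rewrite inE; apply: f_step.
Qed.

Lemma bigminn_le N x (F : nat -> nat) j : (j < N)%N -> (\big[minn/x]_(i < N) F i <= F j)%N.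
Proof.
by move=> j_lt; exact (bigmin_le (T := nat) x (Ordinal j_lt) (fun i : 'I_N => F i)).
Qed.

Lemma inner_distance_le_row n L i j : (i < n)%N -> (j.+1 < n)%N ->
  (inner_distance n L <= dist n (L i j) (L i j.+1))%N.
Proof.
move=> i_lt j_lt; rewrite /inner_distance geq_min; apply/orP; left.
apply: leq_trans
  (bigminn_le n (fun i => \big[minn/n]_(j < n.-1) dist n (L i j) (L i j.+1)) i_lt) _.
by apply: (bigminn_le n (fun j => dist n (L i j) (L i j.+1))); lia.
Qed.

Lemma inner_distance_le_col n L i j : (i.+1 < n)%N -> (j < n)%N ->
  (inner_distance n L <= dist n (L i j) (L i.+1 j))%N.
Proof.
move=> i_lt j_lt; rewrite /inner_distance geq_min; apply/orP; right.
have i_lt' : (i < n.-1)%N by lia.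
apply: leq_trans
  (bigminn_le n (fun i => \big[minn/n]_(j < n) dist n (L i j) (L i.+1 j)) i_lt') _.
exact: (bigminn_le n (fun j => dist n (L i j) (L i.+1 j))).
Qed.

Lemma eq_of_eqmod_symbols n a b : (1 <= a <= n)%N -> (1 <= b <= n)%N ->
  (a%:Z = b%:Z %[mod n])%Z -> a = b.
Proof. by move=> a_range b_range /eqz_mod_small; lia. Qed.

Lemma latin_row_eqmod_inj n u j j' : latin_row n u -> (j < n)%N -> (j' < n)%N ->
  ((u j)%:Z = (u j')%:Z %[mod n])%Z -> j = j'.
Proof.
case=> range inj j_lt j'_lt /(eq_of_eqmod_symbols (range j j_lt) (range j' j'_lt)).
exact: inj.
Qed.

Definition row_translate n (s u : nat -> nat) : Prop :=
  exists c : int, forall j, (j < n)%N -> ((u j)%:Z = (s j)%:Z + c %[mod n])%Z.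

Lemma row_translate_refl n s : row_translate n s s.
Proof. by exists 0 => j _; rewrite addr0. Qed.

Lemma row_translate_sym n s u : row_translate n s u -> row_translate n u s.
Proof.
case=> c su; exists (- c) => j /su /eqz_modP[q e].
by apply/eqz_modP; exists (- q); lia.
Qed.

Lemma row_translate_trans n s u v :
  row_translate n s u -> row_translate n u v -> row_translate n s v.
Proof.
case=> c su [c' uv]; exists (c + c') => j j_lt.
case/eqz_modP: (su j j_lt) => q e; case/eqz_modP: (uv j j_lt) => q' e'.
by apply/eqz_modP; exists (q + q'); lia.
Qed.

Lemma to_sym_range n x : (0 < n)%N -> (1 <= to_sym n x <= n)%N.
Proof.
move=> n_gt0; rewrite /to_sym; have := ltn_pmod (x + n.-1) n_gt0.
by move: ((x + n.-1) %% n)%N; lia.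
Qed.

Lemma to_sym_eqmod n x : (0 < n)%N -> ((to_sym n x)%:Z = x%:Z %[mod n])%Z.
Proof.
move=> n_gt0; rewrite /to_sym; apply/eqz_modP; exists (1 - ((x + n.-1) %/ n)%:Z).
by have := divn_eq (x + n.-1) n; lia.
Qed.

Lemma sum_diff_row n f j : (0 < n)%N ->
  ((\sum_(k < j) diff_row n f k)%:Z = (f j)%:Z - (f 0%N)%:Z %[mod n])%Z.
Proof.
move=> n_gt0; elim: j => [|j IH]; first by rewrite big_ord0 subrr.
rewrite big_ord_recr /= PoszD; case/eqz_modP: IH => q ->.
case/eqz_modP: (mdiff_eqmod (f j) (f j.+1) n_gt0) => q' e'.
by apply/eqz_modP; exists (q - q'); rewrite /diff_row; lia.
Qed.

Lemma row_product_of_translates n L : (0 < n)%N -> latin_square n L ->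
  (forall i, (i < n)%N -> row_translate n (L 0%N) (L i)) -> row_product n L.
Proof.
move=> n_gt0 [lat_rows lat_cols] translates.
exists (L 0%N), (L^~ 0%N), (L 0%N 0%N).-1; split; first exact: lat_rows.
split; first exact: lat_cols.
move=> i j i_lt j_lt; have [range_i _] := lat_rows i i_lt.
apply: eq_of_eqmod_symbols (range_i j j_lt) (to_sym_range _ n_gt0) _.
have [range_0 _] := lat_rows 0%N n_gt0; have L00_pos := range_0 0%N n_gt0.
have [c trans_i] := translates i i_lt.
case/eqz_modP: (trans_i j j_lt) => q1 e1; case/eqz_modP: (trans_i 0%N n_gt0) => q2 e2.
case/eqz_modP: (sum_diff_row (L^~ 0%N) i n_gt0) => q3 e3.
case/eqz_modP: (sum_diff_row (L 0%N) j n_gt0) => q4 e4.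
rewrite /prodm; set S := (1 + _ + _)%N.
case/eqz_modP: (to_sym_eqmod S n_gt0) => q5 e5.
case/eqz_modP: (to_sym_eqmod (to_sym n S + (L 0%N 0%N).-1) n_gt0) => q6 e6.
by apply/eqz_modP; exists (q1 - q2 - q3 - q4 - q5 - q6); rewrite e6 /S in e5 *; lia.
Qed.

(* Offsets e, o of a row whose symbols are b + k + e k in column 2k and
   b + k + m + o k in column 2k + 1 (mod 2m).  The steps come from the inner
   distance, the rest from the Latin property: symbols in columns of equal
   parity, and the two pairs of columns (2m - 2, 1), (0, 2m - 1), must differ. *)
Record admissible_offsets (m : nat) (e o : nat -> int) : Prop := AdmissibleOffsets {
  offsets_step_in : forall k, (k < m)%N -> -1 <= o k - e k <= 1;
  offsets_step_out : forall k, (k.+1 < m)%N -> -2 <= e k.+1 - o k <= 0;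
  offsets_inj_e : forall k k', (k < k' < m)%N -> k%:Z + e k != k'%:Z + e k';
  offsets_inj_o : forall k k', (k < k' < m)%N -> k%:Z + o k != k'%:Z + o k';
  offsets_wrap_eo : m.-1%:Z + e m.-1 != m%:Z + o 0%N;
  offsets_wrap_oe : e 0%N != o m.-1 - 1 }.

Section AdmissibleOffsets.

Variables (m : nat) (e o : nat -> int).
Hypotheses (m_ge3 : (3 <= m)%N) (adm : admissible_offsets m e o).

Lemma offsets_two_valued_constant c :
  (forall k, (k < m)%N -> c <= e k <= c + 1 /\ c <= o k <= c + 1) ->
  forall k, (k < m)%N -> e k = e 0%N /\ o k = e 0%N.
Proof.
case: adm => _ step_out inj_e inj_o wrap_eo wrap_oe range.
have e_mono : forall i j, (i <= j < m)%N -> e i <= e j.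
  apply: nondecn_lt => k km; have := inj_e k k.+1.
  by have := range k (ltnW km); have := range k.+1 km; lia.
have o_mono : forall i j, (i <= j < m)%N -> o i <= o j.
  apply: nondecn_lt => k km; have := inj_o k k.+1.
  by have := range k (ltnW km); have := range k.+1 km; lia.
move=> k km.
have := range 0%N ltac:(lia); have := range m.-1 ltac:(lia); have := range k km.
have := e_mono 0%N k; have := o_mono 0%N k; have := e_mono 0%N m.-1.
have := o_mono k m.-1; case: k km => [|k] km; first lia.
by have := o_mono k m.-1; have := step_out k km; lia.
Qed.

Hypothesis nonzero : forall k, (k < m)%N ->
  -2 <= e k <= 2 /\ e k != 0 /\ -2 <= o k <= 2 /\ o k != 0.

(* A sign change forces o k = 1 and e k.+1 = -1, after which columns
   k - 1, k + 1 or k + 2 collide. *)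
Lemma offsets_no_sign_change k : (k.+1 < m)%N -> 0 < o k -> 0 < e k.+1.
Proof.
case: adm => step_in step_out inj_e inj_o _ _ km ok_gt0.
rewrite ltNge; apply/negP => ek1_le0.
have [ok1 ek1] : o k = 1 /\ e k.+1 = -1.
  by have := nonzero (ltnW km); have := nonzero km; have := step_out k km; lia.
have ek_pos : 1 <= e k <= 2.
  by have := nonzero (ltnW km); have := step_in k (ltnW km); lia.
have [k2m|] := ltnP k.+2 m.
  have [ek2 [ok1' ek2']] : e k = 2 /\ o k.+1 = -1 /\ e k.+2 = -1.
    have := nonzero km; have := nonzero k2m; have := step_in k.+1 km.
    by have := step_out k.+1 k2m; have := inj_e k.+1 k.+2; have := inj_e k k.+2; lia.
  case: k km k2m ok1 ek1 ek_pos ek2 ok1' ek2' {ok_gt0 ek1_le0} => [|k] km k2m *.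
    have := nonzero k2m; have := step_in 2%N k2m.
    by have := inj_o 0%N 2%N; have := inj_o 1%N 2%N; lia.
  by have := nonzero (ltnW (ltnW km)); have := step_out k (ltnW km); have := inj_o k k.+1; lia.
case: k km ok1 ek1 ek_pos {ok_gt0 ek1_le0} => [|k] km *; first lia.
have := nonzero (ltnW (ltnW km)); have := step_in k (ltnW (ltnW km)).
have := step_out k (ltnW km); have := inj_o k k.+1; have := inj_e k k.+1.
by have := inj_e k k.+2; lia.
Qed.

Lemma offsets_nonzero_constant k : (k < m)%N -> e k = e 0%N /\ o k = e 0%N.
Proof.
move=> km.
have step_in := offsets_step_in adm; have step_out := offsets_step_out adm.
have sign : forall i, (i < m)%N -> (0 < e i) = (0 < e 0%N) /\ (0 < o i) = (0 < e 0%N).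
  elim=> [|i IH] im; first by have := nonzero im; have := step_in 0%N im; lia.
  have := IH (ltnW im); have := nonzero (ltnW im); have := nonzero im.
  have := step_out i im; have := step_in i.+1 im.
  by have := offsets_no_sign_change im; lia.
have [e0_gt0|e0_lt0] : 0 < e 0%N \/ e 0%N < 0 by have := @nonzero 0%N ltac:(lia); lia.
- apply: (offsets_two_valued_constant (c := 1) _ km) => i im.
  by have := sign i im; have := nonzero im; lia.
- apply: (offsets_two_valued_constant (c := -2) _ km) => i im.
  by have := sign i im; have := nonzero im; lia.
Qed.

End AdmissibleOffsets.

Section AntipodalRows.

Variable m : nat.
Hypothesis m_ge3 : (3 <= m)%N.
Local Notation n := (2 * m)%N.

Let n_gt0 : (0 < n)%N. Proof. by lia. Qed.

Definition gap (a b : nat) : int := (mdiff n a b)%:Z - m%:Z.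

Definition near_antipodal (a b : nat) : Prop := -1 <= gap a b <= 1.

Definition antipodal_row (u : nat -> nat) : Prop :=
  forall j, (j.+1 < n)%N -> near_antipodal (u j) (u j.+1).

Definition rowA_perturbed (b : int) (e o : nat -> int) (u : nat -> nat) : Prop :=
  forall k, (k < m)%N -> ((u (2 * k)%N)%:Z = b + k%:Z + e k %[mod n])%Z /\
                         ((u (2 * k).+1)%:Z = b + k%:Z + m%:Z + o k %[mod n])%Z.

Definition rowA_shape (a : int) (s : nat -> nat) : Prop :=
  rowA_perturbed a (fun=> 0) (fun=> 0) s.

Definition rowA_like (s : nat -> nat) : Prop := exists a, rowA_shape a s.

Lemma gap_eqmod a b : (b%:Z = a%:Z + m%:Z + gap a b %[mod n])%Z.
Proof.
rewrite /gap (_ : a%:Z + m%:Z + _ = a%:Z + (mdiff n a b)%:Z); last by lia.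
exact: mdiff_eqmod.
Qed.

Lemma near_antipodal_sym a b : near_antipodal a b -> near_antipodal b a.
Proof. by rewrite /near_antipodal /gap; have := mdiff_swap_sum a b n_gt0; lia. Qed.

Lemma near_antipodal_of_dist a b : (m.-1 <= dist n a b)%N -> near_antipodal a b.
Proof.
rewrite /near_antipodal /gap /dist leq_min => /andP[ba ab].
by have := mdiff_swap_sum a b n_gt0; lia.
Qed.

Lemma forall_even_odd (P : nat -> Prop) :
  (forall k, (k < m)%N -> P (2 * k)%N /\ P (2 * k).+1) -> forall j, (j < n)%N -> P j.
Proof.
move=> P_even_odd j j_lt; have [k j_eq] : exists k, j = (2 * k)%N \/ j = (2 * k).+1.
  by exists j./2; have := odd_double_half j; case: (odd j); lia.
have [P_even P_odd] := P_even_odd k ltac:(lia).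
by case: j_eq => ->.
Qed.

Lemma rowA_perturbed_of_shifts a c s t (x : nat -> int) : rowA_shape a s ->
  (forall j, (j < n)%N -> ((t j)%:Z = (s j)%:Z + c + x j %[mod n])%Z) ->
  rowA_perturbed (a + c) (fun k => x (2 * k)%N) (fun k => x (2 * k).+1) t.
Proof.
move=> shape shifts k km; have /= [s_even s_odd] := shape k km.
case/eqz_modP: s_even => q1 e1; case/eqz_modP: s_odd => q2 e2.
case/eqz_modP: (shifts (2 * k)%N ltac:(lia)) => q3 e3.
case/eqz_modP: (shifts (2 * k).+1 ltac:(lia)) => q4 e4.
by split; apply/eqz_modP; [exists (q1 + q3) | exists (q2 + q4)]; lia.
Qed.

Lemma rowA_perturbed_gap b e o u : rowA_perturbed b e o u ->
  (forall k, (k < m)%N ->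
     (o k - e k = gap (u (2 * k)%N) (u (2 * k).+1) %[mod n])%Z) /\
  (forall k, (k.+1 < m)%N ->
     (e k.+1 - o k + 1 = gap (u (2 * k).+1) (u (2 * k.+1)%N) %[mod n])%Z).
Proof.
move=> pert; split=> k km.
- have [ue uo] := pert k km.
  case/eqz_modP: ue => q1 e1; case/eqz_modP: uo => q2 e2.
  case/eqz_modP: (gap_eqmod (u (2 * k)%N) (u (2 * k).+1)) => q3 e3.
  by apply/eqz_modP; exists (q3 + q1 - q2); lia.
- have [_ uo] := pert k (ltnW km); have [ue _] := pert k.+1 km.
  case/eqz_modP: ue => q1 e1; case/eqz_modP: uo => q2 e2.
  case/eqz_modP: (gap_eqmod (u (2 * k).+1) (u (2 * k.+1)%N)) => q3 e3.
  by apply/eqz_modP; exists (q3 + q2 - q1 + 1); lia.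
Qed.

(* The coarse bounds make the congruences with the gaps exact, since n >= 6. *)
Lemma rowA_perturbed_steps b e o u : antipodal_row u -> rowA_perturbed b e o u ->
  (forall k, (k < m)%N -> -4 <= o k - e k <= 4) ->
  (forall k, (k.+1 < m)%N -> -4 <= e k.+1 - o k <= 2) ->
  (forall k, (k < m)%N -> -1 <= o k - e k <= 1) /\
  (forall k, (k.+1 < m)%N -> -2 <= e k.+1 - o k <= 0).
Proof.
move=> anti_u /rowA_perturbed_gap[gap_in gap_out] coarse_in coarse_out; split=> k km.
- have := anti_u (2 * k)%N ltac:(lia); rewrite /near_antipodal.
  by have := coarse_in k km; move/eqz_mod_small: (gap_in k km); lia.
- have := anti_u (2 * k).+1 ltac:(lia).
  rewrite /near_antipodal (_ : (2 * k).+2 = 2 * k.+1)%N; last by lia.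
  by have := coarse_out k km; move/eqz_mod_small: (gap_out k km); lia.
Qed.

Lemma rowA_perturbed_inj b e o u : latin_row n u -> rowA_perturbed b e o u ->
  [/\ forall k k', (k < k' < m)%N -> k%:Z + e k != k'%:Z + e k',
      forall k k', (k < k' < m)%N -> k%:Z + o k != k'%:Z + o k',
      m.-1%:Z + e m.-1 != m%:Z + o 0%N &
      e 0%N != o m.-1 - 1].
Proof.
move=> lat_u pert; split.
- move=> k k' /andP[kk' k'm]; apply/eqP => h.
  case/eqz_modP: (proj1 (pert k ltac:(lia))) => q1 e1.
  case/eqz_modP: (proj1 (pert k' k'm)) => q2 e2.
  suff: (2 * k)%N = (2 * k')%N by lia.
  by apply: (latin_row_eqmod_inj lat_u); [lia | lia | apply/eqz_modP; exists (q1 - q2); lia].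
- move=> k k' /andP[kk' k'm]; apply/eqP => h.
  case/eqz_modP: (proj2 (pert k ltac:(lia))) => q1 e1.
  case/eqz_modP: (proj2 (pert k' k'm)) => q2 e2.
  suff: (2 * k).+1 = (2 * k').+1 by lia.
  by apply: (latin_row_eqmod_inj lat_u); [lia | lia | apply/eqz_modP; exists (q1 - q2); lia].
- apply/eqP => h.
  case/eqz_modP: (proj1 (pert m.-1 ltac:(lia))) => q1 e1.
  case/eqz_modP: (proj2 (pert 0%N ltac:(lia))) => q2 e2.
  suff: (2 * m.-1)%N = (2 * 0).+1 by lia.
  by apply: (latin_row_eqmod_inj lat_u); [lia | lia | apply/eqz_modP; exists (q1 - q2); lia].
- apply/eqP => h.
  case/eqz_modP: (proj1 (pert 0%N ltac:(lia))) => q1 e1.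
  case/eqz_modP: (proj2 (pert m.-1 ltac:(lia))) => q2 e2.
  suff: (2 * 0)%N = (2 * m.-1).+1 by lia.
  apply: (latin_row_eqmod_inj lat_u); [lia | lia |].
  by apply/eqz_modP; exists (q1 - q2 - 1); lia.
Qed.

Lemma rowA_perturbed_admissible b e o u :
  latin_row n u -> antipodal_row u -> rowA_perturbed b e o u ->
  (forall k, (k < m)%N -> -4 <= o k - e k <= 4) ->
  (forall k, (k.+1 < m)%N -> -4 <= e k.+1 - o k <= 2) ->
  admissible_offsets m e o.
Proof.
move=> lat_u anti_u pert coarse_in coarse_out.
have [step_in step_out] := rowA_perturbed_steps anti_u pert coarse_in coarse_out.
have [inj_e inj_o wrap_eo wrap_oe] := rowA_perturbed_inj lat_u pert.
exact: AdmissibleOffsets.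
Qed.

Lemma rowA_gap_admissible a s u : rowA_shape a s -> latin_row n u -> antipodal_row u ->
  (forall j, (j < n)%N -> near_antipodal (s j) (u j)) ->
  admissible_offsets m (fun k => gap (s (2 * k)%N) (u (2 * k)%N))
                       (fun k => gap (s (2 * k).+1) (u (2 * k).+1)).
Proof.
move=> shape lat_u anti_u near_su.
have gap_bound j : (j < n)%N -> -1 <= gap (s j) (u j) <= 1 := near_su j.
have := rowA_perturbed_of_shifts (x := fun j => gap (s j) (u j)) shape
  (fun j _ => gap_eqmod _ _).
move/(rowA_perturbed_admissible lat_u anti_u); apply=> k km /=.
  by have := gap_bound (2 * k)%N ltac:(lia); have := gap_bound (2 * k).+1 ltac:(lia); lia.
by have := gap_bound (2 * k.+1)%N ltac:(lia); have := gap_bound (2 * k).+1 ltac:(lia); lia.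
Qed.

Lemma rowA_translate_of_missing_gap s u (g : int) :
  rowA_like s -> latin_row n u -> antipodal_row u ->
  (forall j, (j < n)%N -> near_antipodal (s j) (u j)) ->
  -1 <= g <= 1 -> (forall j, (j < n)%N -> gap (s j) (u j) != g) ->
  row_translate n s u.
Proof.
case=> a shape lat_u anti_u near_su g_bound g_missing.
pose x j := gap (s j) (u j).
have x_bound j : (j < n)%N -> -1 <= x j <= 1 /\ x j != g.
  by move=> j_lt; split; [exact: near_su | exact: g_missing].
have adm : admissible_offsets m (fun k => x (2 * k)%N) (fun k => x (2 * k).+1) :=
  rowA_gap_admissible shape lat_u anti_u near_su.
have x_const : forall k, (k < m)%N -> x (2 * k)%N = x 0%N /\ x (2 * k).+1 = x 0%N.
  move=> k km; have [g_neg|[g0|g_pos]] : g = -1 \/ g = 0 \/ g = 1 by lia.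
  - apply: (offsets_two_valued_constant m_ge3 adm (c := 0) _ km) => i im.
    by have := x_bound (2 * i)%N ltac:(lia); have := x_bound (2 * i).+1 ltac:(lia); lia.
  - apply: (offsets_nonzero_constant m_ge3 adm _ km) => i im.
    by have := x_bound (2 * i)%N ltac:(lia); have := x_bound (2 * i).+1 ltac:(lia); lia.
  - apply: (offsets_two_valued_constant m_ge3 adm (c := -1) _ km) => i im.
    by have := x_bound (2 * i)%N ltac:(lia); have := x_bound (2 * i).+1 ltac:(lia); lia.
exists (m%:Z + x 0%N); apply: forall_even_odd => k km.
have [x_even x_odd] := x_const k km.
by split; rewrite addrA; [rewrite -x_even | rewrite -x_odd]; exact: gap_eqmod.
Qed.

Lemma rowA_translate_of_two_rows_below s u v :
  rowA_like s -> latin_row n u -> antipodal_row u -> latin_row n v -> antipodal_row v ->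
  (forall j, (j < n)%N -> near_antipodal (s j) (u j)) ->
  (forall j, (j < n)%N -> near_antipodal (u j) (v j)) ->
  (forall j, (j < n)%N -> ((v j)%:Z <> (s j)%:Z %[mod n])%Z) ->
  row_translate n s u.
Proof.
case=> a shape lat_u anti_u lat_v anti_v near_su near_uv v_not_s.
pose x j := gap (s j) (u j); pose y j := gap (u j) (v j); pose w j := x j + y j.
have x_bound j : (j < n)%N -> -1 <= x j <= 1 := near_su j.
have y_bound j : (j < n)%N -> -1 <= y j <= 1 := near_uv j.
have adm_u : admissible_offsets m (fun k => x (2 * k)%N) (fun k => x (2 * k).+1) :=
  rowA_gap_admissible shape lat_u anti_u near_su.
have v_shift j : (j < n)%N -> ((v j)%:Z = (s j)%:Z + n%:Z + w j %[mod n])%Z.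
  move=> _; case/eqz_modP: (gap_eqmod (s j) (u j)) => q1 e1.
  case/eqz_modP: (gap_eqmod (u j) (v j)) => q2 e2.
  by apply/eqz_modP; exists (q1 + q2); rewrite /w /x /y; lia.
have pert_v := rowA_perturbed_of_shifts (x := w) shape v_shift.
have adm_v : admissible_offsets m (fun k => w (2 * k)%N) (fun k => w (2 * k).+1).
  apply: rowA_perturbed_admissible lat_v anti_v pert_v _ _ => k km /=; rewrite /w.
    have := x_bound (2 * k)%N ltac:(lia); have := x_bound (2 * k).+1 ltac:(lia).
    by have := y_bound (2 * k)%N ltac:(lia); have := y_bound (2 * k).+1 ltac:(lia); lia.
  have := offsets_step_out adm_u km; have := y_bound (2 * k.+1)%N ltac:(lia).
  by have := y_bound (2 * k).+1 ltac:(lia); rewrite /=; lia.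
have w_bound j : (j < n)%N -> -2 <= w j <= 2 /\ w j != 0.
  move=> j_lt; have := x_bound j j_lt; have := y_bound j j_lt; rewrite /w; split; first lia.
  apply/eqP => w0; apply: (v_not_s j j_lt); case/eqz_modP: (v_shift j j_lt) => q e.
  by apply/eqz_modP; exists (q + 1); rewrite /w in e; lia.
have w_const : forall j, (j < n)%N -> w j = w 0%N.
  apply: forall_even_odd => k km.
  apply: (offsets_nonzero_constant m_ge3 adm_v _ km) => i im.
  by have := w_bound (2 * i)%N ltac:(lia); have := w_bound (2 * i).+1 ltac:(lia); lia.
apply: (rowA_translate_of_missing_gap (g := if 0 < w 0%N then -1 else 1)) => //.
- by exists a.
- by case: ifP.
move=> j j_lt; have := w_const j j_lt; have := w_bound 0%N n_gt0.
by have := x_bound j j_lt; have := y_bound j j_lt; case: ifP; rewrite /w /x; lia.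
Qed.

Lemma rowA_like_translate s u : rowA_like s -> row_translate n s u -> rowA_like u.
Proof.
case=> a shape [c trans]; exists (a + c).
by apply: (rowA_perturbed_of_shifts (x := fun=> 0) shape) => j /trans; rewrite addr0.
Qed.

Lemma rowA_like_of_ext_diff_row s :
  (forall j, (j < n)%N -> ext_diff_row n s j = rowA n j) -> rowA_like s.
Proof.
move=> ext_rowA; have half_n : (n./2 = m)%N by rewrite mul2n doubleK.
have step j : (j.+1 < n)%N -> ((s j.+1)%:Z = (s j)%:Z + m%:Z + (odd j)%:Z %[mod n])%Z.
  move=> j_lt; have := ext_rowA j (ltnW j_lt).
  rewrite /ext_diff_row /rowA /diff_row half_n (_ : (j < n.-1)%N); last by lia.
  move=> ext_j; case/eqz_modP: (mdiff_eqmod (s j) (s j.+1) n_gt0) => q e.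
  by apply/eqz_modP; exists q; lia.
exists (s 0%N)%:Z; elim=> [|k IH] km /=.
  rewrite muln0; have /eqz_modP[q e] := step 0%N ltac:(lia).
  by split; apply/eqz_modP; [exists 0 | exists q]; lia.
have /= [/eqz_modP[q1 e1] /eqz_modP[q2 e2]] := IH (ltnW km).
have /eqz_modP[q3 e3] := step (2 * k).+1 ltac:(lia).
have /eqz_modP[q4 e4] := step (2 * k.+1)%N ltac:(lia).
rewrite (_ : (2 * k).+2 = 2 * k.+1)%N in e3; last by lia.
by split; apply/eqz_modP; [exists (q2 + q3 + 1) | exists (q2 + q3 + q4 + 1)]; lia.
Qed.

End AntipodalRows.

Section RowPropagation.

Variables (m : nat) (L : nat -> nat -> nat) (r : nat).
Local Notation n := (2 * m)%N.
Hypotheses (m_ge3 : (3 <= m)%N) (latL : latin_square n L)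
  (inner_L : (m.-1 <= inner_distance n L)%N)
  (r_lt : (r < n)%N) (rowA_r : rowA_like m (L r)).

Let n_gt0 : (0 < n)%N. Proof. by lia. Qed.

Lemma square_row_latin i : (i < n)%N -> latin_row n (L i).
Proof. exact: latL.1. Qed.

Lemma square_col_inj i i' j : (i < n)%N -> (i' < n)%N -> (j < n)%N ->
  ((L i j)%:Z = (L i' j)%:Z %[mod n])%Z -> i = i'.
Proof. by move=> i_lt i'_lt j_lt; apply: (latin_row_eqmod_inj (latL.2 j j_lt)). Qed.

Lemma square_row_antipodal i : (i < n)%N -> antipodal_row m (L i).
Proof.
move=> i_lt j j_lt; apply: (near_antipodal_of_dist m_ge3).
exact: leq_trans inner_L (inner_distance_le_row L i_lt j_lt).
Qed.

Lemma square_col_antipodal i j : (i.+1 < n)%N -> (j < n)%N ->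
  near_antipodal m (L i j) (L i.+1 j).
Proof.
move=> i_lt j_lt; apply: (near_antipodal_of_dist m_ge3).
exact: leq_trans inner_L (inner_distance_le_col L i_lt j_lt).
Qed.

Lemma translate_step_down k : (k.+2 < n)%N ->
  row_translate n (L r) (L k) -> row_translate n (L r) (L k.+1).
Proof.
move=> k_lt r_k; apply: (row_translate_trans r_k).
apply: (rowA_translate_of_two_rows_below m_ge3 (v := L k.+2)).
- exact: (rowA_like_translate m_ge3 rowA_r r_k).
- by apply: square_row_latin; lia.
- by apply: square_row_antipodal; lia.
- by apply: square_row_latin; lia.
- by apply: square_row_antipodal; lia.
- by move=> j j_lt; apply: square_col_antipodal; lia.
- by move=> j j_lt; apply: square_col_antipodal.
- by move=> j j_lt /square_col_inj; lia.
Qed.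

Lemma translate_step_up k : (k.+2 < n)%N ->
  row_translate n (L r) (L k.+2) -> row_translate n (L r) (L k.+1).
Proof.
move=> k_lt r_k; apply: (row_translate_trans r_k).
apply: (rowA_translate_of_two_rows_below m_ge3 (v := L k)).
- exact: (rowA_like_translate m_ge3 rowA_r r_k).
- by apply: square_row_latin; lia.
- by apply: square_row_antipodal; lia.
- by apply: square_row_latin; lia.
- by apply: square_row_antipodal; lia.
- by move=> j j_lt; apply/(near_antipodal_sym m_ge3)/square_col_antipodal.
- by move=> j j_lt; apply/(near_antipodal_sym m_ge3)/square_col_antipodal => //; lia.
- by move=> j j_lt /square_col_inj; lia.
Qed.

Lemma translate_inner i : (0 < i)%N -> (i.+1 < n)%N -> row_translate n (L r) (L i).
Proof.
move=> i_gt0 i_lt; have [r_le_i|i_lt_r] := leqP r i.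
  elim: i {i_gt0} i_lt r_le_i => [|i IH] i_lt r_le_i.
    by rewrite (_ : r = 0%N); [exact: row_translate_refl | lia].
  have [i_lt_r|r_le_i'] := ltnP i r.
    by rewrite (_ : r = i.+1); [exact: row_translate_refl | lia].
  by apply: translate_step_down; [lia | apply: IH; lia].
have : forall d, (d < r)%N -> row_translate n (L r) (L (r - d)).
  elim=> [|d IH] d_lt; first by rewrite subn0; exact: row_translate_refl.
  rewrite (_ : r - d.+1 = (r - d.+2).+1)%N; last by lia.
  apply: translate_step_up; first by lia.
  by rewrite (_ : (r - d.+2).+2 = r - d)%N; [apply: IH | ]; lia.
by move/(_ (r - i)%N); rewrite subKn; [apply; lia | lia].
Qed.

Lemma translate_boundary b k1 k2 : (b < n)%N -> (k1 < n)%N -> (k2 < n)%N -> b != k2 ->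
  row_translate n (L r) (L k1) -> row_translate n (L r) (L k2) ->
  (forall j, (j < n)%N -> near_antipodal m (L k1 j) (L b j)) ->
  near_antipodal m (L k1 0%N) (L k2 0%N) -> row_translate n (L r) (L b).
Proof.
move=> b_lt k1_lt k2_lt b_k2 r_k1 r_k2 near_k1b near_k12.
apply: (row_translate_trans r_k1).
have [c k1_k2] := row_translate_trans (row_translate_sym r_k1) r_k2.
apply: (rowA_translate_of_missing_gap m_ge3 (g := gap m (L k1 0%N) (L k2 0%N))) => //.
- exact: (rowA_like_translate m_ge3 rowA_r r_k1).
- by apply: square_row_latin; lia.
- by apply: square_row_antipodal; lia.
move=> j j_lt; apply/eqP => gap_eq; move/eqP: b_k2; apply.
apply: (square_col_inj b_lt k2_lt j_lt).
case/eqz_modP: (gap_eqmod m_ge3 (L k1 j) (L b j)) => q1 e1.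
case/eqz_modP: (gap_eqmod m_ge3 (L k1 0%N) (L k2 0%N)) => q2 e2.
case/eqz_modP: (k1_k2 j j_lt) => q3 e3; case/eqz_modP: (k1_k2 0%N n_gt0) => q4 e4.
by apply/eqz_modP; exists (q1 - q2 - q3 + q4); lia.
Qed.

Lemma square_rows_translate i : (i < n)%N -> row_translate n (L 0%N) (L i).
Proof.
have r_0 : row_translate n (L r) (L 0%N).
  apply: (translate_boundary (k1 := 1) (k2 := 2)) => //; try lia.
  - by apply: translate_inner; lia.
  - by apply: translate_inner; lia.
  - by move=> j j_lt; apply/(near_antipodal_sym m_ge3)/square_col_antipodal => //; lia.
  - by apply: square_col_antipodal; lia.
have r_last : row_translate n (L r) (L n.-1).
  apply: (translate_boundary (k1 := n.-2) (k2 := n - 3)) => //; try lia.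
  - by apply: translate_inner; lia.
  - by apply: translate_inner; lia.
  - move=> j j_lt; have := @square_col_antipodal n.-2 j ltac:(lia) j_lt.
    by rewrite (_ : n.-2.+1 = n.-1)%N; last by lia.
  - apply: (near_antipodal_sym m_ge3).
    have := @square_col_antipodal (n - 3) 0 ltac:(lia) n_gt0.
    by rewrite (_ : (n - 3).+1 = n.-2)%N; last by lia.
move=> i_lt; apply: row_translate_trans (row_translate_sym r_0) _.
have [->|i_gt0] := posnP i; first exact: r_0.
have [->|i_ne] := eqVneq i n.-1; first exact: r_last.
by apply: translate_inner; lia.
Qed.

End RowPropagation.

Local Close Scope ring_scope.

Theorem mainTheorem18 (n : nat) (L : nat -> nat -> nat) :
  6 <= n -> ~~ odd n ->
  latin_square n L ->
  inner_distance n L = n./2 - 1 ->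
  (exists i, i < n /\ forall j, j < n -> ext_diff_row n (L i) j = rowA n j) ->
  row_product n L.
Proof.
move=> n_ge6 n_even latL inner_L [r [r_lt ext_r]].
have [m n_eq] : exists m, n = 2 * m.
  by exists n./2; have := odd_double_half n; rewrite (negbTE n_even); lia.
subst n; have m_ge3 : 3 <= m by lia.
have inner_ge : m.-1 <= inner_distance (2 * m) L by rewrite inner_L mul2n doubleK; lia.
apply: (row_product_of_translates _ latL); first by lia.
exact: square_rows_translate m_ge3 latL inner_ge r_lt (rowA_like_of_ext_diff_row m_ge3 ext_r).
Qed.
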